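(* Let $\tilde Q\subseteq\mathfrak P$ be an independent set, let $\tilde S\subseteq\mathfrak P$, let $(a,b)$ with $a,b\in\mathcal G(\tilde Q)$ be a conjugal pair in relation to $\tilde S$, and let $o$ be a Pauli operator with $o\in G_{\tilde Q}(a)\cup G_{\tilde Q}(b)$. Then there exists a pair $(c,d)$ such that (1) $c,d\in\mathcal G(\tilde Q)$; (2) $o\in G_{\tilde Q}(c)$; (3) $o\notin G_{\tilde Q}(d)$; (4) $(c,d)$ is a conjugal pair in relation to $(\tilde S\setminus\{a,b\})\cup\{c,d\}$; and (5) $\mathcal G(\{c,d\})=\mathcal G(\{a,b\})$.
   Context: $\mathfrak P$ is the group of $N$-qubit Pauli operators modulo phases; $\mathcal G(T)$ is the set of all products of elements of $T$. A set is independent if no element is a product of other elements of the set. For an independent set $\tilde Q$ and $q\in\mathcal G(\tilde Q)$, $G_{\tilde Q}(q)\subseteq\tilde Q$ is the unique subset whose product equals $q$. A pair $(a,b)$ is a conjugal pair in relation to a set $X$ if each of $a,b$ commutes with every operator in $X$ except its partner (the other member of the pair), should the partner lie in $X$. *)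

From mathcomp Require Import all_boot.
Set Implicit Arguments. Unset Strict Implicit. Unset Printing Implicit Defensive.

(* A single-qubit Pauli modulo phase is encoded by its (x,z) bits:
   I = (false,false), X = (true,false), Z = (false,true), Y = (true,true).
   An N-qubit Pauli modulo phases is a tensor product of these. *)
Definition Pauli (N : nat) := {ffun 'I_N -> bool * bool}.

Definition pmul N (p q : Pauli N) : Pauli N :=
  [ffun i => (((p i).1 (+) (q i).1), ((p i).2 (+) (q i).2))].

Definition pone N : Pauli N := [ffun _ => (false, false)].

Definition anticomm1 (u v : bool * bool) : bool :=
  (u.1 && v.2) (+) (u.2 && v.1).

Definition pcommute N (p q : Pauli N) : bool :=
  ~~ odd #|[set i : 'I_N | anticomm1 (p i) (q i)]|.

Definition prodP N (A : {set Pauli N}) : Pauli N :=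
  \big[@pmul N/@pone N]_(t in A) t.

Definition gen N (T : {set Pauli N}) : {set Pauli N} :=
  [set prodP A | A in powerset T].

Definition independent N (T : {set Pauli N}) : bool :=
  [forall x in T, x \notin gen (T :\ x)].

(* G_Q(q): the subset of Q whose product is q (unique when Q is independent
   and q \in gen Q); defaults to set0 when no such subset exists. *)
Definition decomp N (Q : {set Pauli N}) (q : Pauli N) : {set Pauli N} :=
  odflt set0 [pick A : {set Pauli N} | (A \subset Q) && (prodP A == q)].

Definition conjugal_pair N (a b : Pauli N) (X : {set Pauli N}) : Prop :=
  (forall x, x \in X -> x != b -> pcommute a x) /\
  (forall x, x \in X -> x != a -> pcommute b x).

(** Modulo phases, Pauli operators form an elementary abelian 2-group and
    commutation with a fixed operator is a character of it, so [pmul a b]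
    commutes with everything that both [a] and [b] commute with.  By
    independence, the decomposition of [pmul a b] over [Q] is the symmetric
    difference of those of [a] and [b].  Up to swapping [a] and [b], the
    operator [o] lies in the decomposition of [a]; if it also lies in that of
    [b], replace [b] by [pmul a b], which keeps [(a, _)] conjugal and
    generates the same group, and otherwise keep [(a, b)]. *)
From HB Require Import structures.
From mathcomp Require Import all_boot.
Set Implicit Arguments. Unset Strict Implicit.

Section PauliGroup.
Variable N : nat.
Local Notation P := (Pauli N).
Implicit Types (p q x : P) (A B T U : {set P}).

Lemma pmulA : associative (@pmul N).
Proof. by move=> p q r; apply/ffunP => i; rewrite !ffunE /= !addbA. Qed.

Lemma pmulC : commutative (@pmul N).
Proof. by move=> p q; apply/ffunP => i; rewrite !ffunE /= addbC [_.2 (+) _]addbC. Qed.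

Lemma pmul1 : left_id (@pone N) (@pmul N).
Proof. by move=> p; apply/ffunP => i; rewrite !ffunE /=; case: (p i). Qed.

Lemma pmulpp p : pmul p p = pone N.
Proof. by apply/ffunP => i; rewrite !ffunE /= !addbb. Qed.

HB.instance Definition _ :=
  Monoid.isComLaw.Build P (pone N) (@pmul N) pmulA pmulC pmul1.

Lemma prodP_symdiff A B :
  pmul (prodP A) (prodP B) = prodP ((A :\: B) :|: (B :\: A)).
Proof.
rewrite /prodP (big_setID (A := A) B) (big_setID (A := B) A).
rewrite (big_setID (A := (A :\: B) :|: (B :\: A)) B) setIC /=.
have -> : (A :\: B :|: B :\: A) :&: B = B :\: A.
  by apply/setP => x; rewrite !inE; case: (x \in A); case: (x \in B).
have -> : (A :\: B :|: B :\: A) :\: B = A :\: B.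
  by apply/setP => x; rewrite !inE; case: (x \in A); case: (x \in B).
set u := \big[_/_]_(i in B :&: A) i.
by rewrite -pmulA [pmul _ (pmul u _)]pmulC -pmulA pmulA pmulpp pmul1 pmulC.
Qed.

Lemma odd_card_set (f : 'I_N -> bool) :
  odd #|[set i | f i]| = \big[addb/false]_i f i.
Proof.
rewrite cardsE -sum1_card big_mkcond /= (big_morph odd oddD (erefl (odd 0))).
by apply: eq_bigr => i _; rewrite unfold_in; case: (f i).
Qed.

Lemma pcommuteM p q x :
  pcommute (pmul p q) x = (pcommute p x == pcommute q x).
Proof.
rewrite /pcommute !odd_card_set.
rewrite (eq_bigr (fun i => anticomm1 (p i) (x i) (+) anticomm1 (q i) (x i))).
  by rewrite big_split /=; case: (\big[_/_]_i _); case: (\big[_/_]_i _).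
move=> i _; rewrite ffunE /anticomm1 /=.
by case: (p i) => [[] []]; case: (q i) => [[] []]; case: (x i) => [[] []].
Qed.

Lemma pcommutepp p : pcommute p p.
Proof.
rewrite /pcommute (_ : [set i | _] = set0) ?cards0 //.
by apply/setP => i; rewrite !inE /anticomm1; case: (p i) => [[] []].
Qed.

Lemma mem_gen T x : x \in T -> x \in gen T.
Proof.
by move=> xT; apply/imsetP; exists [set x]; rewrite ?inE ?sub1set // /prodP big_set1.
Qed.

Lemma genM T p q : p \in gen T -> q \in gen T -> pmul p q \in gen T.
Proof.
case/imsetP => A; rewrite inE => sAT ->; case/imsetP => B; rewrite inE => sBT ->.
rewrite prodP_symdiff; apply/imsetP; exists ((A :\: B) :|: (B :\: A)) => //.
by rewrite inE subUset !(subset_trans (subsetDl _ _)).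
Qed.

Lemma gen_min T (G : {set P}) : pone N \in G -> T \subset G ->
  {in G &, forall p q, pmul p q \in G} -> gen T \subset G.
Proof.
move=> G1 sTG mulG; apply/subsetP => y /imsetP[A]; rewrite inE => sAT ->.
apply: (big_ind (fun z => z \in G)) => // x xA.
exact: subsetP sTG x (subsetP sAT x xA).
Qed.

Lemma gen_subset T U : T \subset gen U -> gen T \subset gen U.
Proof.
move=> sTU; apply: gen_min => //; last exact: genM.
by apply/imsetP; exists set0; rewrite ?inE ?sub0set // /prodP big_set0.
Qed.

Lemma gen_pair_mulr p q : gen [set p; pmul p q] = gen [set p; q].
Proof.
have genl x y : x \in gen [set x; y] by rewrite mem_gen // !inE eqxx.
have genr x y : y \in gen [set x; y] by rewrite mem_gen // !inE eqxx orbT.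
apply/eqP; rewrite eqEsubset !gen_subset // !subUset !sub1set !genl /=.
  by rewrite -[q in q \in _]pmul1 -(pmulpp p) -pmulA genM ?genl ?genr.
by rewrite genM ?genl ?genr.
Qed.

Lemma independent_prodP_inj Q A B : independent Q ->
  A \subset Q -> B \subset Q -> prodP A = prodP B -> A = B.
Proof.
move=> /forallP indQ sAQ sBQ eAB.
set D := (A :\: B) :|: (B :\: A).
have sDQ : D \subset Q by rewrite subUset !(subset_trans (subsetDl _ _)).
have [D0|[x xD]] := set_0Vmem D.
  apply/eqP; rewrite eqEsubset -!setD_eq0 -!subset0.
  by rewrite -D0 subsetUl subsetUr.
have xQ : x \in Q := subsetP sDQ x xD.
have /negP[] := implyP (indQ x) xQ.
apply/imsetP; exists (D :\ x); first by rewrite inE setSD.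
have : prodP D = pone N by rewrite -prodP_symdiff eAB pmulpp.
rewrite /prodP (big_setD1 _ xD) /= => /(f_equal (pmul x)).
by rewrite pmulA pmulpp pmul1 => ->; rewrite pmulC pmul1.
Qed.

Lemma decompK Q q : q \in gen Q ->
  decomp Q q \subset Q /\ prodP (decomp Q q) = q.
Proof.
case/imsetP => A; rewrite inE => sAQ ->; rewrite /decomp.
by case: pickP => [B /andP[sBQ /eqP] | /(_ A)] //=; rewrite sAQ eqxx.
Qed.

Lemma decomp_prodP Q A : independent Q -> A \subset Q -> decomp Q (prodP A) = A.
Proof.
move=> iQ sAQ; have [|sDQ eD] := decompK (Q := Q) (q := prodP A).
  by apply/imsetP; exists A; rewrite ?inE.
exact: independent_prodP_inj iQ sDQ sAQ eD.
Qed.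

Lemma decompM Q p q : independent Q -> p \in gen Q -> q \in gen Q ->
  decomp Q (pmul p q) =
    (decomp Q p :\: decomp Q q) :|: (decomp Q q :\: decomp Q p).
Proof.
move=> iQ /decompK[sPQ {1}<-] /decompK[sQQ {1}<-].
by rewrite prodP_symdiff decomp_prodP // subUset !(subset_trans (subsetDl _ _)).
Qed.

Section ConjugalPair.
Variables (a b : P) (X : {set P}).
Hypothesis abX : conjugal_pair a b X.

Lemma conjugal_pairC : conjugal_pair b a X.
Proof. by case: abX. Qed.

Lemma conjugal_pairS (Y : {set P}) : Y \subset X -> conjugal_pair a b Y.
Proof. by case: abX => ca cb /subsetP sYX; split=> x /sYX; [apply: ca | apply: cb]. Qed.

Lemma conjugal_pairU2 : conjugal_pair a b (X :|: [set a; b]).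
Proof.
case: abX => ca cb.
split=> x; rewrite !inE => /orP[xX | /orP[] /eqP-> ] nx //;
  by [apply: ca | apply: cb | apply: pcommutepp | rewrite eqxx in nx].
Qed.

Lemma conjugal_pair_mulr :
  conjugal_pair a (pmul a b) ((X :\: [set a; b]) :|: [set a; pmul a b]).
Proof.
case: abX => ca cb.
split=> x; rewrite !inE => /orP[/andP[/norP[xa xb] xX] | /orP[] /eqP-> ] nx;
  by [apply: ca | rewrite pcommuteM ca ?cb | apply: pcommutepp | rewrite eqxx in nx].
Qed.

End ConjugalPair.

End PauliGroup.

Unset Implicit Arguments.
Theorem lemma4 (N : nat) (Q S : {set Pauli N}) (a b o : Pauli N) :
  independent Q ->
  a \in gen Q -> b \in gen Q ->
  conjugal_pair a b S ->
  o \in decomp Q a :|: decomp Q b ->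
  exists c d : Pauli N,
    [/\ c \in gen Q /\ d \in gen Q,
        o \in decomp Q c,
        o \notin decomp Q d,
        conjugal_pair c d ((S :\: [set a; b]) :|: [set c; d])
      & gen [set c; d] = gen [set a; b]].
Proof.
move=> iQ aQ bQ abS oab.
wlog oa : a b aQ bQ abS {oab} / o \in decomp Q a.
  move=> hw; case/setUP: oab => [|ob]; first exact: hw.
  rewrite [[set a; b]]setUC; exact: hw (conjugal_pairC abS) ob.
have [ob | ob] := boolP (o \in decomp Q b).
- exists a, (pmul a b); split=> //; first by rewrite genM.
  + by rewrite decompM // !inE oa ob.
  + exact: conjugal_pair_mulr.
  + exact: gen_pair_mulr.
- exists a, b; split=> //.
  apply: (conjugal_pairS (conjugal_pairU2 abS)).
  by rewrite setSU // subsetDl.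
Qed.
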